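(* Let $q\neq-1$ be real and $n\ge1$. Then $$T_n(x,s,q)\,T_n(x,qs,q)-(x^2+qs)\,U_{n-1}(x,qs,q)\,U_{n-1}(x,q^2s,q)=q^{\binom{n+1}{2}}(-s)^n.$$
   Context: $T_0=1$, $T_1=x$, $T_n(x,s,q)=(1+q^{n-1})x\,T_{n-1}(x,s,q)+q^{n-1}s\,T_{n-2}(x,s,q)$ for $n\ge2$; $U_{-1}=0$, $U_0=1$, $U_n(x,s,q)=(1+q^{n})x\,U_{n-1}(x,s,q)+q^{n-1}s\,U_{n-2}(x,s,q)$ for $n\ge1$. *)

From HB Require Import structures.
From mathcomp Require Import all_boot all_order all_algebra.
Set Implicit Arguments. Unset Strict Implicit. Unset Printing Implicit Defensive.
Import Order.TTheory GRing.Theory Num.Theory.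
Local Open Scope ring_scope.

Fixpoint Tpoly {R : realFieldType} (x s q : R) (n : nat) : R :=
  match n with
  | 0%N => 1
  | 1%N => x
  | (S k as m).+1 =>
      (1 + q ^+ m) * x * Tpoly x s q m + q ^+ m * s * Tpoly x s q k
  end.

(* Ushift n = U_(n-1):  U_(-1) = 0, U_0 = 1,
   U_n = (1+q^n) x U_(n-1) + q^(n-1) s U_(n-2)  (n >= 1), i.e.
   Ushift (k+2) = (1+q^(k+1)) x Ushift (k+1) + q^k s Ushift k. *)
Fixpoint Ushift {R : realFieldType} (x s q : R) (n : nat) : R :=
  match n with
  | 0%N => 0
  | 1%N => 1
  | (S k as m).+1 =>
      (1 + q ^+ m) * x * Ushift x s q m + q ^+ k * s * Ushift x s q k
  end.

Definition Upoly {R : realFieldType} (x s q : R) (n : nat) : R := Ushift x s q n.+1.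

From HB Require Import structures.
From mathcomp Require Import all_boot all_order all_algebra.
From mathcomp Require Import ring.
Import Order.TTheory GRing.Theory Num.Theory.
Local Open Scope ring_scope.

(* The left-hand side is [D n n] for the mixed determinant
   [D i j = T_i(s) T_j(qs) - (x^2 + qs) U_(i-1)(qs) U_(j-1)(q^2 s)].
   The three-term recurrences for [T] and [U] express [D] on the
   levels [(m+2, m+2)], [(m+2, m+1)], [(m+1, m+2)] linearly through the four
   values of [D] on [{m, m+1}^2], and a simultaneous induction shows that
   these four values are [r m+1], [x q^m r m], [x r m] and [r m],
   where [r k = q^(k+1 choose 2) (-s)^k]. *)

Section MixedDeterminant.

Variables (R : realFieldType) (q x s : R).

Local Notation T := (Tpoly x s q).
Local Notation T' := (Tpoly x (q * s) q).
Local Notation U' := (Ushift x (q * s) q).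
Local Notation U'' := (Ushift x (q ^+ 2 * s) q).

Definition mixed_det (i j : nat) : R :=
  T i * T' j - (x ^+ 2 + q * s) * U' i * U'' j.

Definition det_value (k : nat) : R := q ^+ 'C(k.+1, 2) * (- s) ^+ k.

Lemma det_valueS k : det_value k.+1 = - (q ^+ k.+1 * s) * det_value k.
Proof. by rewrite /det_value binS bin1 exprD !exprS; ring. Qed.

Local Notation a m := ((1 + q ^+ m.+1) * x).
Local Notation b m := (q ^+ m.+1 * s).

Lemma TpolySS m : T m.+2 = a m * T m.+1 + b m * T m.
Proof. by []. Qed.

Lemma Tpoly_qSS m : T' m.+2 = a m * T' m.+1 + q * b m * T' m.
Proof. by rewrite /=; ring. Qed.

Lemma Ushift_qSS m : U' m.+2 = a m * U' m.+1 + b m * U' m.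
Proof. by rewrite /= !exprS; ring. Qed.

Lemma Ushift_q2SS m : U'' m.+2 = a m * U'' m.+1 + q * b m * U'' m.
Proof. by rewrite /= !exprS; ring. Qed.

Lemma mixed_detSl m j : mixed_det m.+2 j = a m * mixed_det m.+1 j + b m * mixed_det m j.
Proof. by rewrite /mixed_det TpolySS Ushift_qSS; ring. Qed.

Lemma mixed_detSr m i :
  mixed_det i m.+2 = a m * mixed_det i m.+1 + q * b m * mixed_det i m.
Proof. by rewrite /mixed_det Tpoly_qSS Ushift_q2SS; ring. Qed.

Lemma mixed_det_closed m :
  [/\ mixed_det m.+1 m.+1 = det_value m.+1,
      mixed_det m.+1 m = x * q ^+ m * det_value m,
      mixed_det m m.+1 = x * det_value m &
      mixed_det m m = det_value m].
Proof.
elim: m => [|m [d11 d10 d01 d00]].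
  by rewrite /mixed_det det_valueS /det_value /=; split; ring.
have rS := det_valueS m; have rSS := det_valueS m.+1.
split=> //.
- by rewrite mixed_detSr !mixed_detSl d11 d10 d01 d00 rSS rS !exprS; ring.
- by rewrite mixed_detSl d11 d01 rS !exprS; ring.
- by rewrite mixed_detSr d11 d10 rS !exprS; ring.
Qed.

End MixedDeterminant.

Theorem theorem2p10 (R : realFieldType) (q x s : R) (n : nat) :
  q != -1 -> (1 <= n)%N ->
  Tpoly x s q n * Tpoly x (q * s) q n
  - (x ^+ 2 + q * s) * Upoly x (q * s) q n.-1 * Upoly x (q ^+ 2 * s) q n.-1
  = q ^+ 'C(n.+1, 2) * (- s) ^+ n.
Proof.
move=> _; case: n => [//|m] _.
by have [] := @mixed_det_closed R q x s m.
Qed.
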